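(* Let $V=\mathbb{R}^r$, let $\mathcal{A}$ be a simplicial arrangement in $V$, let $K=\langle\alpha^\vee_1,\ldots,\alpha^\vee_r\rangle_{>0}$ be a chamber (with $\alpha^\vee_1,\ldots,\alpha^\vee_r$ a basis of $V$), and let $\tilde K$ be the chamber with $\overline{K}\cap\overline{\tilde K}=\langle\alpha^\vee_2,\ldots,\alpha^\vee_r\rangle_{\ge 0}$. Let $\beta^\vee\in V$ be the unique vector such that $\tilde K=\langle\beta^\vee,\alpha^\vee_2,\ldots,\alpha^\vee_r\rangle_{>0}$ and $|B\cap(-\tilde B)|=1$, where $B=\{\alpha_1,\ldots,\alpha_r\}$ is the dual basis of $\{\alpha^\vee_1,\ldots,\alpha^\vee_r\}$ and $\tilde B=\{\beta_1,\ldots,\beta_r\}$ is the dual basis of $\{\beta^\vee,\alpha^\vee_2,\ldots,\alpha^\vee_r\}$ (indexed so that $\beta_1$ is dual to $\beta^\vee$ and $\beta_j$ to $\alpha_j^\vee$ for $j>1$). Write $\beta^\vee=\sum_{i=1}^r\mu_i\alpha^\vee_i$ with $\mu_i\in\mathbb{R}$. Then the linear map $\sigma:V^*\to V^*$, $\alpha_i\mapsto\beta_i$ ($i=1,\ldots,r$), is a reflection, and its matrix with respect to $B$ (the $j$-th column being the coordinate vector of $\sigma(\alpha_j)$) is \[\begin{pmatrix}-1&\mu_2&\cdots&\mu_r\\0&1&&0\\\vdots&&\ddots&\\0&0&&1\end{pmatrix}.\]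
   Context: A hyperplane arrangement in $V$ is a finite set of linear hyperplanes; its chambers are the connected components of the complement of their union. It is simplicial if every chamber equals $\langle v_1,\ldots,v_r\rangle_{>0}=\{\sum a_iv_i\mid a_i>0\}$ for some basis $v_1,\ldots,v_r$ of $V$; $\langle\cdots\rangle_{\ge0}$ denotes the closed cone of nonnegative combinations. A reflection on a vector space $W$ is an element $\sigma\in\mathrm{GL}(W)$, $\sigma\ne\mathrm{id}$, of finite order which fixes some hyperplane of $W$ pointwise. *)

From HB Require Import structures.
From mathcomp Require Import all_boot all_order all_algebra.
From mathcomp Require Import all_classical all_reals all_analysis.
Set Implicit Arguments. Unset Strict Implicit. Unset Printing Implicit Defensive.
Import Order.TTheory GRing.Theory Num.Theory numFieldNormedType.Exports.
Local Open Scope ring_scope.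
Local Open Scope classical_set_scope.

(* V = R^r is modelled as row vectors 'rV[R]_r (with its standard topology);
   the dual space V^* is modelled as column vectors 'cV[R]_r, a functional
   f acting by x |-> x *m f. *)

Definition is_hyperplane (R : realType) (r : nat) (H : set 'rV[R]_r) : Prop :=
  exists a : 'cV[R]_r, a != 0 /\ H = [set x | x *m a = 0].

Definition is_arrangement (R : realType) (r : nat) (A : set (set 'rV[R]_r)) : Prop :=
  finite_set A /\ (forall H, A H -> is_hyperplane H).

Definition arr_complement (R : realType) (r : nat) (A : set (set 'rV[R]_r))
  : set 'rV[R]_r := ~` (\bigcup_(H in A) H).

Definition is_chamber (R : realType) (r : nat) (A : set (set 'rV[R]_r))
  (C : set 'rV[R]_r) : Prop :=
  exists2 x, arr_complement A x & C = connected_component (arr_complement A) x.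

Definition open_cone (R : realType) (r : nat) (I : finType) (v : I -> 'rV[R]_r)
  : set 'rV[R]_r :=
  [set x | exists a : I -> R, (forall i, 0 < a i) /\ x = \sum_i a i *: v i].
Definition closed_cone (R : realType) (r : nat) (I : finType) (v : I -> 'rV[R]_r)
  : set 'rV[R]_r :=
  [set x | exists a : I -> R, (forall i, 0 <= a i) /\ x = \sum_i a i *: v i].

Definition is_basis (R : realType) (r : nat) (v : 'I_r -> 'rV[R]_r) : Prop :=
  row_free (\matrix_(i < r) v i).

Definition simplicial (R : realType) (r : nat) (A : set (set 'rV[R]_r)) : Prop :=
  forall C, is_chamber A C ->
    exists2 v : 'I_r -> 'rV[R]_r, is_basis v & C = open_cone v.

Definition is_dual_basis (R : realType) (r : nat) (v : 'I_r -> 'rV[R]_r)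
  (f : 'I_r -> 'cV[R]_r) : Prop :=
  forall i j, v i *m f j = (i == j)%:R%:M.

Definition repl0 (R : realType) (n : nat) (b : 'rV[R]_n.+1)
  (v : 'I_n.+1 -> 'rV[R]_n.+1) : 'I_n.+1 -> 'rV[R]_n.+1 :=
  fun i => if i == ord0 then b else v i.

Definition tail_fam (R : realType) (n : nat) (v : 'I_n.+1 -> 'rV[R]_n.+1)
  : 'I_n -> 'rV[R]_n.+1 := fun j => v (lift ord0 j).

Definition is_reflection (R : realType) (n : nat) (S : 'M[R]_n.+1) : Prop :=
  [/\ S \in unitmx, S != 1%:M, (exists2 k : nat, (0 < k)%N & S ^+ k = 1)
    & exists2 u : 'rV[R]_n.+1, u != 0 & forall f : 'cV[R]_n.+1, u *m f = 0 -> S *m f = f].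

Definition cor_matrix (R : realType) (n : nat) (mu : 'I_n.+1 -> R) : 'M[R]_n.+1 :=
  \matrix_(i, j) (if i == ord0 then (if j == ord0 then -1 else mu j)
                  else (i == j)%:R).

From HB Require Import structures.
From mathcomp Require Import all_boot all_order all_algebra.
From mathcomp Require Import all_classical all_reals all_analysis.
From mathcomp Require Import lra.
Import Order.TTheory GRing.Theory Num.Theory numFieldNormedType.Exports.
Local Open Scope ring_scope.
Local Open Scope classical_set_scope.

Set Implicit Arguments.
Unset Strict Implicit.
Unset Printing Implicit Defensive.

(* The condition |B ∩ -B~| = 1 can only hold through beta_1 = -alpha_1; pairing
   with beta^v then gives mu_1 = -1, so the rows (beta^v, alpha^v_2, ...) are C
   times the rows alpha^v_i, C being the claimed matrix.  C = 1 + e_1 w with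
   w e_1 = -2 is an involution, hence the dual basis B~ is B C, and
   sigma = B C B^-1 = 1 + b u with u b = -2 is again an involution fixing the
   hyperplane ker u pointwise. *)

Section RowsCols.
Variable R : comPzRingType.

Definition rows_of m n (v : 'I_m -> 'rV[R]_n) : 'M[R]_(m, n) := \matrix_i v i.
Definition cols_of m n (f : 'I_m -> 'cV[R]_n) : 'M[R]_(n, m) :=
  \matrix_(i, j) f j i 0.

Lemma col_cols_of m n (f : 'I_m -> 'cV[R]_n) j : col j (cols_of f) = f j.
Proof. by apply/colP => i; rewrite !mxE. Qed.

Lemma mulmx_cols_of m n p (M : 'M[R]_(p, n)) (f : 'I_m -> 'cV[R]_n) :
  M *m cols_of f = cols_of (fun j => M *m f j).
Proof. by apply/matrixP => i j; rewrite !mxE; apply: eq_bigr => k _; rewrite mxE. Qed.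

Lemma cols_of_mul_col m n (f : 'I_m -> 'cV[R]_n) (a : 'cV[R]_m) :
  cols_of f *m a = \sum_j a j 0 *: f j.
Proof.
apply/colP => i; rewrite !(mxE, summxE); apply: eq_bigr => j _.
by rewrite !mxE mulrC.
Qed.

Lemma rows_of_mul m n p (v : 'I_m -> 'rV[R]_n) (f : 'I_p -> 'cV[R]_n) i j :
  (rows_of v *m cols_of f) i j = (v i *m f j) 0 0.
Proof. by rewrite !mxE; apply: eq_bigr => k _; rewrite !mxE. Qed.

End RowsCols.

Lemma scalar_mx1_inj (R : pzRingType) (a b : R) : a%:M = b%:M :> 'M[R]_1 -> a = b.
Proof. by move/matrixP/(_ 0 0); rewrite !mxE eqxx !mulr1n. Qed.

Lemma rank_one_involutive (R : comPzRingType) n (b : 'cV[R]_n) (u : 'rV[R]_n) :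
  u *m b = (-2)%:M -> (1%:M + b *m u) *m (1%:M + b *m u) = 1%:M.
Proof.
move=> ub.
rewrite mulmxDl mulmxDr !mul1mx mulmxDr mulmx1.
rewrite mulmxA -(mulmxA b) ub mul_mx_scalar.
by rewrite -scalemxAl scaleNr scaler_nat mulr2n opprD !addrA addrK addrK.
Qed.

Lemma is_reflection_rank_one (R : realType) n (b : 'cV[R]_n.+1) (u : 'rV[R]_n.+1) :
  u *m b = (-2)%:M -> is_reflection (1%:M + b *m u).
Proof.
move=> ub; have S2 := rank_one_involutive ub.
have ub_neq0 : u *m b != 0.
  by rewrite ub; apply/eqP => /matrixP/(_ 0 0); rewrite !mxE eqxx mulr1n; lra.
split.
- by have [] := mulmx1_unit S2.
- apply/eqP => /(congr1 (fun M => u *m M *m b)).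
  rewrite mulmxDr mulmx1 mulmxDl -[RHS]addr0 => /addrI.
  rewrite mulmxA -mulmxA ub -scalar_mxM => /matrixP/(_ 0 0).
  by rewrite !mxE eqxx mulr1n; lra.
- by exists 2%N => //; rewrite expr2.
- exists u; first by apply: contraNneq ub_neq0 => ->; rewrite mul0mx.
  by move=> f uf0; rewrite mulmxDl mul1mx -mulmxA uf0 mulmx0 addr0.
Qed.

Section DualBases.
Variable R : realType.

Lemma dual_basis_mulmx r (v : 'I_r -> 'rV[R]_r) (f : 'I_r -> 'cV[R]_r) :
  is_dual_basis v f -> rows_of v *m cols_of f = 1%:M.
Proof. by move=> vf; apply/matrixP => i j; rewrite rows_of_mul vf !mxE eqxx mulr1n. Qed.

Lemma dual_basis_coord r (v : 'I_r -> 'rV[R]_r) (f : 'I_r -> 'cV[R]_r)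
    (a : 'I_r -> R) j :
  is_dual_basis v f -> (\sum_i a i *: v i) *m f j = (a j)%:M.
Proof.
move=> vf; rewrite mulmx_suml (bigD1 j) //= -scalemxAl vf eqxx scalemx1.
by rewrite big1 ?addr0 // => i /negbTE ij; rewrite -scalemxAl vf ij raddf0 scaler0.
Qed.

Variable n : nat.
Variables (alpha : 'I_n.+1 -> 'rV[R]_n.+1) (beta : 'rV[R]_n.+1).
Variables (B Bt : 'I_n.+1 -> 'cV[R]_n.+1).
Hypotheses (alphaB : is_dual_basis alpha B)
  (betaBt : is_dual_basis (repl0 beta alpha) Bt).

Lemma dual_basis_repl0_opp i j : B i = - Bt j -> i = ord0 /\ j = ord0.
Proof.
move=> Bij.
have pair k : k != ord0 -> (k == i)%:R = - (k == j)%:R :> R.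
  move=> k0; apply: scalar_mx1_inj; rewrite -alphaB Bij mulmxN raddfN /=.
  by rewrite -betaBt /repl0 (negbTE k0).
have i0 : i = ord0.
  by apply/eqP/negP => /negP/pair; rewrite eqxx; case: (i == j) => /=; lra.
split=> //; apply/eqP/negP => /negP j0.
by move: (pair j j0); rewrite eqxx i0 (negbTE j0) /=; lra.
Qed.

Lemma repl0_coord0_eqN1 (mu : 'I_n.+1 -> R) :
  beta = \sum_i mu i *: alpha i -> B ord0 = - Bt ord0 -> mu ord0 = -1.
Proof.
move=> beta_mu B0; apply: scalar_mx1_inj.
rewrite -(dual_basis_coord mu _ alphaB) -beta_mu B0 mulmxN raddfN /=.
by have := betaBt ord0 ord0; rewrite /repl0 eqxx => ->.
Qed.

End DualBases.

Lemma rows_of_repl0 (R : realType) n (alpha : 'I_n.+1 -> 'rV[R]_n.+1) mu :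
  mu ord0 = -1 ->
  rows_of (repl0 (\sum_i mu i *: alpha i) alpha) = cor_matrix mu *m rows_of alpha.
Proof.
move=> mu0; apply/row_matrixP => i; rewrite row_mul !rowK mulmx_sum_row /repl0.
under [RHS]eq_bigr do rewrite rowK !mxE.
case: eqP => _.
  by apply: eq_bigr => j _; case: eqP => [->|]; rewrite ?mu0.
rewrite [RHS](bigD1 i) //= eqxx scale1r big1 ?addr0 // => j /negbTE ij.
by rewrite eq_sym ij scale0r.
Qed.

Section CorMatrix.
Variables (R : realType) (n : nat) (mu : 'I_n.+1 -> R).

Definition cor_form : 'rV[R]_n.+1 := \row_j (if j == ord0 then -2 else mu j).

Lemma cor_matrixE : cor_matrix mu = 1%:M + delta_mx ord0 0 *m cor_form.
Proof.
apply/matrixP => i j; rewrite !mxE big_ord1 !mxE eqxx andbT.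
case: (eqVneq i ord0) => [->|_]; case: ifP => [/eqP->|j0] /=; try lra.
by rewrite eq_sym j0 mul1r add0r.
Qed.

Lemma cor_form_delta : cor_form *m delta_mx ord0 0 = (-2)%:M.
Proof.
apply/matrixP => i j; rewrite !(ord1 i, ord1 j) !mxE (bigD1 ord0) //= big1.
  by rewrite !mxE !eqxx /= mulr1 addr0.
by move=> k /negbTE k0; rewrite !mxE k0 mulr0.
Qed.

End CorMatrix.

Theorem corollary2p6 (R : realType) (n : nat)
  (A : set (set 'rV[R]_n.+1))
  (alpha : 'I_n.+1 -> 'rV[R]_n.+1) (Kt : set 'rV[R]_n.+1)
  (beta : 'rV[R]_n.+1)
  (B Bt : 'I_n.+1 -> 'cV[R]_n.+1)
  (mu : 'I_n.+1 -> R) (S : 'M[R]_n.+1) :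
  is_arrangement A -> simplicial A ->
  is_basis alpha -> is_chamber A (open_cone alpha) ->
  is_chamber A Kt ->
  closure (open_cone alpha) `&` closure Kt = closed_cone (tail_fam alpha) ->
  Kt = open_cone (repl0 beta alpha) ->
  is_dual_basis alpha B ->
  is_dual_basis (repl0 beta alpha) Bt ->
  (exists! f : 'cV[R]_n.+1, (exists i, f = B i) /\ (exists j, f = - Bt j)) ->
  beta = \sum_i mu i *: alpha i ->
  (forall i, S *m B i = Bt i) ->
  is_reflection S /\
  (forall j, S *m B j = \sum_i cor_matrix mu i j *: B i).
Proof.
move=> _ _ _ _ _ _ _ alphaB betaBt [_ [[[i ->] [j Bij]] _]] beta_mu SB.
have [i0 j0] := dual_basis_repl0_opp alphaB betaBt Bij; subst i j.
have mu0 := repl0_coord0_eqN1 alphaB betaBt beta_mu Bij.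
set P := rows_of alpha; set Q := cols_of B; set C := cor_matrix mu.
have PQ : P *m Q = 1%:M := dual_basis_mulmx alphaB.
have QP := mulmx1C PQ.
have CC : C *m C = 1%:M by rewrite /C cor_matrixE rank_one_involutive ?cor_form_delta.
have Bt_QC : cols_of Bt = Q *m C.
  have := dual_basis_mulmx betaBt; rewrite beta_mu rows_of_repl0 // -/P -/C => CPBt.
  by rewrite -[cols_of Bt]mul1mx -QP -[P]mul1mx -CC -!mulmxA (mulmxA C P) CPBt mulmx1.
have SQ : S *m Q = Q *m C by rewrite mulmx_cols_of -Bt_QC; congr cols_of; apply: funext.
split.
- have -> : S = 1%:M + (Q *m delta_mx ord0 0) *m (cor_form mu *m P).
    by rewrite -[S]mulmx1 -QP mulmxA SQ /C cor_matrixE mulmxDr mulmx1 mulmxDl QP !mulmxA.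
  by apply: is_reflection_rank_one; rewrite mulmxA -(mulmxA _ P) PQ mulmx1 cor_form_delta.
- move=> k; rewrite SB -(col_cols_of Bt) Bt_QC colE -mulmxA -colE cols_of_mul_col.
  by apply: eq_bigr => l _; rewrite !mxE.
Qed.
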